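(* Let $K\in\mathcal{B}(H)$, let $U\in\mathcal{B}(H)$ be invertible, and let $\Lambda=\{(W_j,\Lambda_j,v_j)\}_{j\in J}$ be a $K$-g-fusion frame for $H$. Then $\Gamma=\{(U W_j,\ \Lambda_j P_{W_j}U^{*},\ v_j)\}_{j\in J}$ is a $UKU^{*}$-g-fusion frame for $H$; that is, there exist $0<A'\le B'<\infty$ with $$A'\|(UKU^* )^*f\|^2\le \sum_{j\in J} v_j^2\|\Lambda_jP_{W_j}U^*P_{UW_j}f\|^2\le B'\|f\|^2\quad\forall f\in H.$$
   Context: $H$ is a separable Hilbert space, $J$ a countable index set, $\{H_j\}_{j\in J}$ a family of Hilbert spaces, $\mathcal{B}(H_1,H_2)$ the bounded linear operators, $\mathcal B(H)=\mathcal B(H,H)$, and for a closed subspace $W\subseteq H$, $P_W$ is the orthogonal projection onto $W$. Given closed subspaces $W_j\subseteq H$, positive weights $v_j>0$, operators $\Lambda_j\in\mathcal{B}(H,H_j)$ ($j\in J$) and $K\in\mathcal B(H)$, the family $\Lambda=\{(W_j,\Lambda_j,v_j)\}_{j\in J}$ is called a $K$-g-fusion frame for $H$ (with respect to $\{H_j\}$) if there are constants $0<A\le B<\infty$ such that $A\|K^*f\|^2\le\sum_{j\in J}v_j^2\|\Lambda_jP_{W_j}f\|^2\le B\|f\|^2$ for all $f\in H$. A g-fusion frame is a $K$-g-fusion frame with $K=I_H$, i.e. $A\|f\|^2\le\sum_j v_j^2\|\Lambda_jP_{W_j}f\|^2\le B\|f\|^2$. *)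

From HB Require Import structures.
From mathcomp Require Import all_boot all_order all_algebra.
From mathcomp Require Import complex.
From mathcomp Require Import all_classical all_reals ereal esum.

Set Implicit Arguments.
Unset Strict Implicit.
Unset Printing Implicit Defensive.

Import Order.TTheory GRing.Theory Num.Theory.
Local Open Scope ring_scope.
Local Open Scope classical_set_scope.

Section HilbertDefs.
Variable R : realType.
Local Notation C := R[i].

Definition inner_axioms (V : lmodType C) (ip : V -> V -> C) : Prop :=
  [/\ forall (a : C) (x y z : V), ip (a *: x + y) z = a * ip x z + ip y z,
      forall x y : V, ip x y = conjc (ip y x),
      forall x : V, 0 <= complex.Re (ip x x) /\ complex.Im (ip x x) = 0
    & forall x : V, ip x x = 0 -> x = 0].

Definition ipnorm (V : lmodType C) (ip : V -> V -> C) (x : V) : R :=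
  Num.sqrt (complex.Re (ip x x)).

Definition ip_complete (V : lmodType C) (ip : V -> V -> C) : Prop :=
  forall u : nat -> V,
    (forall e : R, 0 < e -> exists N, forall m n, (N <= m)%N -> (N <= n)%N ->
       ipnorm ip (u m - u n) < e) ->
    exists l : V, forall e : R, 0 < e -> exists N, forall n, (N <= n)%N ->
       ipnorm ip (u n - l) < e.

Record hilbert := Hilbert {
  hcar :> lmodType C;
  hinner : hcar -> hcar -> C;
  hinner_axioms : inner_axioms hinner;
  hcomplete : ip_complete hinner }.

Definition hnorm (H : hilbert) (x : H) : R := ipnorm (@hinner H) x.

Definition separable (H : hilbert) : Prop :=
  exists d : nat -> H, forall (x : H) (e : R), 0 < e ->
    exists n, hnorm (x - d n) < e.

Definition closed_subspace (H : hilbert) (W : set H) : Prop :=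
  [/\ W 0,
      forall (a : C) (x y : H), W x -> W y -> W (a *: x + y)
    & forall (u : nat -> H) (l : H), (forall n, W (u n)) ->
        (forall e : R, 0 < e -> exists N, forall n, (N <= n)%N ->
           hnorm (u n - l) < e) -> W l].

Definition bounded_op (H1 H2 : hilbert) (T : H1 -> H2) : Prop :=
  (forall (a : C) (x y : H1), T (a *: x + y) = a *: T x + T y) /\
  exists c : R, forall x : H1, hnorm (T x) <= c * hnorm x.

Definition invertible_op (H : hilbert) (U : H -> H) : Prop :=
  bounded_op U /\ exists V : H -> H, [/\ bounded_op V, U \o V = id & V \o U = id].

Definition is_adjoint (H1 H2 : hilbert) (T : H1 -> H2) (S : H2 -> H1) : Prop :=
  forall (x : H1) (y : H2), hinner (T x) y = hinner x (S y).

(* Orthogonal projection P_W onto W: P_W x is the (unique, for W a closed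
   subspace) y in W with x - y orthogonal to W. *)
Definition orthproj (H : hilbert) (W : set H) (x : H) : H :=
  match pselect (exists y : H, W y /\ forall w, W w -> hinner (x - y) w = 0) with
  | left e => projT1 (cid e)
  | right _ => 0
  end.

Definition KgFF (H : hilbert) (J : countType) (Hs : J -> hilbert)
    (K : H -> H) (W : J -> set H) (Lam : forall j, H -> Hs j) (v : J -> R) : Prop :=
  [/\ forall j, closed_subspace (W j),
      forall j, bounded_op (Lam j),
      forall j, 0 < v j
    & exists Ks : H -> H, is_adjoint K Ks /\
      exists A B : R, [/\ 0 < A, A <= B &
        forall f : H,
          ((A * hnorm (Ks f) ^+ 2)%:E <=
             \esum_(j in [set: J]) (v j ^+ 2 * hnorm (Lam j (orthproj (W j) f)) ^+ 2)%:E)%E /\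
          (\esum_(j in [set: J]) (v j ^+ 2 * hnorm (Lam j (orthproj (W j) f)) ^+ 2)%:E <=
             (B * hnorm f ^+ 2)%:E)%E]].

End HilbertDefs.

From HB Require Import structures.
From mathcomp Require Import all_boot all_order all_algebra.
From mathcomp Require Import complex.
From mathcomp Require Import all_classical all_reals ereal esum.
From mathcomp Require Import ring lra.

Set Implicit Arguments.
Unset Strict Implicit.
Unset Printing Implicit Defensive.
Import Order.TTheory GRing.Theory Num.Theory.
Local Open Scope ring_scope.
Local Open Scope classical_set_scope.

(* The whole proof rests on the identity
       P_{W_j} U^* P_{U W_j} = P_{W_j} U^*,
   valid because U W_j is closed and U^*(f - P_{U W_j} f) is orthogonal to
   W_j.  Hence the frame sum of Gamma at f equals the frame sum of Lambda at
   U^* f, and since (U K U^* )^* = U K^* U^*, the bounds transfer to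
   A / (|U|^2 + 1) and max(that, B |U^*|^2). *)

Section InnerProduct.
Variable R : realType.
Variable H : hilbert R.
Local Notation C := R[i].
Local Notation ip := (@hinner R H).
Local Notation hn := (@hnorm R H).

Lemma inner_linear (a : C) (x y z : H) : ip (a *: x + y) z = a * ip x z + ip y z.
Proof. by case: (hinner_axioms H). Qed.

Lemma inner_conj (x y : H) : ip x y = (ip y x)^*%C.
Proof. by case: (hinner_axioms H). Qed.

Lemma inner_self (x : H) : 0 <= complex.Re (ip x x) /\ complex.Im (ip x x) = 0.
Proof. by case: (hinner_axioms H). Qed.

Lemma inner_definite (x : H) : ip x x = 0 -> x = 0.
Proof. by case: (hinner_axioms H) => _ _ _; apply. Qed.

Lemma inner0l (z : H) : ip 0 z = 0.
Proof.
have := inner_linear 1 0 0 z; rewrite scale1r addr0 mul1r => h.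
by apply: (@addrI _ (ip 0 z)); rewrite addr0 -h.
Qed.

Lemma innerDl (x y z : H) : ip (x + y) z = ip x z + ip y z.
Proof. by rewrite -[x in LHS]scale1r inner_linear mul1r. Qed.

Lemma innerZl a (x z : H) : ip (a *: x) z = a * ip x z.
Proof. by rewrite -[_ *: _]addr0 inner_linear inner0l addr0. Qed.

Lemma innerNl (x z : H) : ip (- x) z = - ip x z.
Proof. by rewrite -scaleN1r innerZl mulN1r. Qed.

Lemma innerBl (x y z : H) : ip (x - y) z = ip x z - ip y z.
Proof. by rewrite innerDl innerNl. Qed.

Lemma inner0r (z : H) : ip z 0 = 0.
Proof. by rewrite inner_conj inner0l conjc0. Qed.

Lemma innerDr (x y z : H) : ip z (x + y) = ip z x + ip z y.
Proof. by rewrite inner_conj innerDl rmorphD /= -!inner_conj. Qed.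

Lemma innerZr a (x z : H) : ip z (a *: x) = a^*%C * ip z x.
Proof. by rewrite inner_conj innerZl rmorphM /= -inner_conj. Qed.

Lemma innerNr (x z : H) : ip z (- x) = - ip z x.
Proof. by rewrite inner_conj innerNl rmorphN /= -inner_conj. Qed.

Lemma innerBr (x y z : H) : ip z (x - y) = ip z x - ip z y.
Proof. by rewrite innerDr innerNr. Qed.

Lemma inner_eq0 (x : H) : (forall y, ip y x = 0) -> x = 0.
Proof. by move=> h; apply: inner_definite; apply: h. Qed.

Definition nsq (x : H) : R := complex.Re (ip x x).

Lemma nsq_ge0 x : 0 <= nsq x. Proof. by case: (inner_self x). Qed.

Lemma inner_selfE x : ip x x = (nsq x)%:C%C.
Proof. by rewrite /nsq; case: (inner_self x); case: (ip x x) => a b /= _ ->. Qed.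

Lemma hnorm_sqr x : hn x ^+ 2 = nsq x.
Proof. by rewrite /hnorm /ipnorm sqr_sqrtr // nsq_ge0. Qed.

Lemma hnorm_ge0 (x : H) : 0 <= hn x. Proof. exact: sqrtr_ge0. Qed.

Lemma hnorm_eq0 x : hn x = 0 -> x = 0.
Proof. by move=> h; apply: inner_definite; rewrite inner_selfE -hnorm_sqr h expr0n. Qed.

Lemma hnorm_le (x : H) (a : R) : 0 <= a -> nsq x <= a ^+ 2 -> hn x <= a.
Proof.
move=> a0 h; rewrite /hnorm /ipnorm -[a]ger0_norm // -sqrtr_sqr ler_sqrt //.
exact: sqr_ge0.
Qed.

Lemma hnorm_lt (x : H) (a : R) : 0 < a -> nsq x < a ^+ 2 -> hn x < a.
Proof.
move=> a0 h; rewrite /hnorm /ipnorm -[a]gtr0_norm // -sqrtr_sqr ltr_sqrt //.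
by rewrite exprn_gt0.
Qed.

Lemma nsqD x y : nsq (x + y) = nsq x + 2 * complex.Re (ip x y) + nsq y.
Proof.
rewrite /nsq innerDl !innerDr [ip y x]inner_conj !raddfD /=.
rewrite (_ : complex.Re (ip x y)^*%C = complex.Re (ip x y)); last by case: (ip x y).
ring.
Qed.

Lemma nsqZ a x : nsq (a *: x) = (complex.Re a ^+ 2 + complex.Im a ^+ 2) * nsq x.
Proof.
by rewrite /nsq innerZl innerZr inner_selfE; case: a => a b /=; simpc => /=; ring.
Qed.

Lemma nsqN x : nsq (- x) = nsq x.
Proof. by rewrite /nsq innerNl innerNr opprK. Qed.

Lemma parallelogram x y : nsq (x + y) + nsq (x - y) = 2 * nsq x + 2 * nsq y.
Proof. rewrite !nsqD innerNr nsqN raddfN /=; ring. Qed.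

(* Cauchy-Schwarz inequality (real part), from nsq (|y| x - |x| y) >= 0. *)
Lemma cauchy_schwarz x y : complex.Re (ip x y) <= hn x * hn y.
Proof.
have [x0|xn0] := eqVneq (hn x) 0.
  by rewrite x0 mul0r (hnorm_eq0 x0) inner0l.
have [y0|yn0] := eqVneq (hn y) 0.
  by rewrite y0 mulr0 (hnorm_eq0 y0) inner0r.
have xp : 0 < hn x by rewrite lt_def xn0 hnorm_ge0.
have yp : 0 < hn y by rewrite lt_def yn0 hnorm_ge0.
have := nsq_ge0 ((hn y)%:C%C *: x + (- hn x)%:C%C *: y).
rewrite nsqD !nsqZ innerZl innerZr conjc_real mulrA -rmorphM /= -!hnorm_sqr.
rewrite (_ : complex.Re (_%:C%C * _) = hn y * - hn x * complex.Re (ip x y)); last first.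
  by case: (ip x y) => a b /=; simpc => /=; ring.
rewrite !expr0n /= !addr0 => h.
rewrite -(ler_pM2l (_ : 0 < 2 * (hn x * hn y))); last by rewrite !mulr_gt0.
nra.
Qed.

Lemma hnorm_triangle x y : hn (x + y) <= hn x + hn y.
Proof.
apply: hnorm_le; first by rewrite addr_ge0 // hnorm_ge0.
by rewrite nsqD -!hnorm_sqr; have := cauchy_schwarz x y; nra.
Qed.

End InnerProduct.


Lemma natSinv_lt (R : realType) (e : R) : 0 < e ->
  exists N, forall n, (N <= n)%N -> (n.+1%:R : R)^-1 < e.
Proof.
move=> e0; exists (Num.truncn e^-1) => n hn.
rewrite -[e]invrK ltf_pV2 ?posrE ?invr_gt0 ?ltr0n //.
by apply: lt_le_trans (truncnS_gt _) _; rewrite ler_nat ltnS.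
Qed.

(* A linear function dominated by a quadratic one with no constant term
   has slope zero: the variational step of the projection theorem. *)
Lemma linear_le_quadratic (R : realFieldType) (a b : R) :
  (forall s, 2 * s * a <= s ^+ 2 * b) -> a = 0.
Proof.
move=> h; pose k := `|b| + 1.
have k0 : 0 < k by rewrite ltr_pwDr // normr_ge0.
have bk : b <= k - 1 by rewrite addrK ler_norm.
have [s ea] : exists s, a = s * k by exists (a / k); rewrite divfK ?gt_eqF.
rewrite {}ea in h *.
have s2 : s ^+ 2 * (k + 1) <= 0.
  rewrite (_ : _ * (k + 1) = 2 * s * (s * k) - s ^+ 2 * (k - 1)); last by ring.
  by rewrite subr_le0; apply: le_trans (h s) _; rewrite ler_wpM2l ?sqr_ge0.
suff -> : s = 0 by rewrite mul0r.
apply/eqP; rewrite -sqrf_eq0 eq_le sqr_ge0 andbT.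
have k1 : 0 < k + 1 by rewrite addr_gt0.
by rewrite -(pmulr_lle0 _ k1).
Qed.

Section ClosedSubspace.
Variable R : realType.
Variable H : hilbert R.
Variable W : set H.
Hypothesis hW : closed_subspace W.

Lemma subspace0 : W 0. Proof. by case: hW. Qed.

Lemma subspaceDZ a x y : W x -> W y -> W (a *: x + y).
Proof. by case: hW => _ h _; apply: h. Qed.

Lemma subspaceZ a x : W x -> W (a *: x).
Proof. by move=> Wx; rewrite -[_ *: _]addr0; apply: subspaceDZ => //; exact: subspace0. Qed.

Lemma subspaceD x y : W x -> W y -> W (x + y).
Proof. by move=> Wx Wy; rewrite -[x]scale1r; apply: subspaceDZ. Qed.

Lemma subspaceB x y : W x -> W y -> W (x - y).
Proof. by move=> Wx Wy; rewrite addrC -scaleN1r; apply: subspaceDZ. Qed.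

Lemma subspace_lim (u : nat -> H) (l : H) : (forall n, W (u n)) ->
  (forall e : R, 0 < e -> exists N, forall n, (N <= n)%N -> hnorm (u n - l) < e) ->
  W l.
Proof. by case: hW => _ _; apply. Qed.

End ClosedSubspace.

Section BestApproximation.
Variable R : realType.
Variable H : hilbert R.
Local Notation ip := (@hinner R H).
Local Notation hn := (@hnorm R H).
Local Notation nsq := (@nsq R H).
Variable W : set H.
Hypothesis hW : closed_subspace W.
Variable x : H.

Definition dist2 : R := inf [set nsq (x - w) | w in W].

Lemma dist2_has_inf : has_inf [set nsq (x - w) | w in W].
Proof.
split; first by exists (nsq (x - 0)), 0; first exact: subspace0.
by exists 0 => _ [w _ <-]; exact: nsq_ge0.
Qed.

Lemma dist2_le w : W w -> dist2 <= nsq (x - w).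
Proof. by move=> Ww; apply: (ge_inf dist2_has_inf.2); exists w. Qed.

Lemma dist2_ge0 : 0 <= dist2.
Proof.
by apply: lb_le_inf; [exact: dist2_has_inf.1 | move=> _ [w _ <-]; exact: nsq_ge0].
Qed.

Lemma dist2_approx (e : R) : 0 < e -> exists2 w, W w & nsq (x - w) < dist2 + e.
Proof. by move=> e0; have [_ [w Ww <-] lt] := inf_adherent e0 dist2_has_inf; exists w. Qed.

(* Two near-minimizers are close to each other (parallelogram law applied to
   x - w1 and x - w2, whose midpoint lies in W). *)
Lemma near_minimizers_close w1 w2 : W w1 -> W w2 ->
  nsq (w1 - w2) <= 2 * (nsq (x - w1) - dist2) + 2 * (nsq (x - w2) - dist2).
Proof.
move=> W1 W2; pose mid := ((2 : R)^-1)%:C%C *: (w1 + w2).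
have Wmid : W mid by apply: subspaceZ => //; apply: subspaceD.
have sum_mid : (x - w1) + (x - w2) = (2 : R)%:C%C *: (x - mid).
  rewrite scalerBr /mid scalerA -rmorphM /= mulfV ?pnatr_eq0 // scale1r.
  rewrite (_ : (2 : R)%:C%C = 1 + 1); last by simpc.
  by rewrite scalerDl scale1r opprD addrACA.
have diff : (x - w1) - (x - w2) = - (w1 - w2).
  by rewrite opprB addrC addrA subrK opprB.
have := parallelogram (x - w1) (x - w2).
rewrite sum_mid diff nsqN nsqZ /= expr0n /= addr0 => hp.
have := dist2_le Wmid; lra.
Qed.

Lemma minimizing_sequence : exists f : nat -> H,
  forall n, W (f n) /\ nsq (x - f n) < dist2 + (n.+1%:R)^-1.
Proof.
suff /choice[f hf] : forall n : nat, exists w, W w /\ nsq (x - w) < dist2 + (n.+1%:R)^-1.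
  by exists f.
move=> n; have [w Ww lt] : exists2 w, W w & nsq (x - w) < dist2 + (n.+1%:R)^-1.
  by apply: dist2_approx; rewrite invr_gt0.
by exists w.
Qed.

Section MinimizingSequence.
Variable f : nat -> H.
Hypothesis hf : forall n, W (f n) /\ nsq (x - f n) < dist2 + (n.+1%:R)^-1.

Lemma minimizing_cauchy (e : R) : 0 < e ->
  exists N, forall m n, (N <= m)%N -> (N <= n)%N -> hn (f m - f n) < e.
Proof.
move=> e0; have e4 : 0 < e ^+ 2 / 4 by rewrite divr_gt0 ?exprn_gt0.
have [N hN] := natSinv_lt e4.
exists N => m n Nm Nn; apply: hnorm_lt => //.
apply: le_lt_trans (near_minimizers_close (hf m).1 (hf n).1) _.
have := (hf m).2; have := (hf n).2; have := hN m Nm; have := hN n Nn.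
move: (e ^+ 2) (m.+1%:R^-1 : R) (n.+1%:R^-1 : R) => E im in_; lra.
Qed.

(* The limit of a minimizing sequence attains the distance: for every e > 0,
   |x - l| <= |x - f n| + |f n - l| <= sqrt dist2 + e for n large. *)
Lemma minimizing_limit l :
  (forall e : R, 0 < e -> exists N, forall n, (N <= n)%N -> hn (f n - l) < e) ->
  nsq (x - l) <= dist2.
Proof.
move=> hl; have d0 := dist2_ge0; rewrite -hnorm_sqr -(sqr_sqrtr d0).
rewrite ler_pXn2r ?nnegrE ?hnorm_ge0 ?sqrtr_ge0 //.
apply/ler_addgt0Pr => e e0; have e2 : 0 < e / 2 by rewrite divr_gt0.
have e4 : 0 < e ^+ 2 / 4 by rewrite divr_gt0 ?exprn_gt0.
have [N1 hN1] := natSinv_lt e4.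
have [N2 hN2] := hl _ e2; pose n := maxn N1 N2.
have approx : hn (x - f n) <= Num.sqrt dist2 + e / 2.
  apply: hnorm_le; first by rewrite addr_ge0 ?sqrtr_ge0 ?ltW.
  have := (hf n).2; have := hN1 n (leq_maxl _ _); have := sqr_sqrtr d0.
  have := mulr_ge0 (sqrtr_ge0 dist2) (ltW e0).
  move: (Num.sqrt dist2) (n.+1%:R^-1 : R) => q t; nra.
have := hN2 n (leq_maxr _ _); have := hnorm_triangle (x - f n) (f n - l).
by rewrite addrA subrK; lra.
Qed.

End MinimizingSequence.

Lemma best_approximation : exists2 l, W l & forall w, W w -> nsq (x - l) <= nsq (x - w).
Proof.
have [f hf] := minimizing_sequence.
have [l hl] := @hcomplete R H f (minimizing_cauchy hf).
exists l; first exact: (subspace_lim hW (fun n => (hf n).1) hl).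
by move=> w Ww; apply: le_trans (minimizing_limit hf hl) (dist2_le Ww).
Qed.

(* A best approximation l is characterized variationally: perturbing it by
   c w (w in W, c real or purely imaginary) cannot decrease |x - l|^2, which
   forces both the real and imaginary parts of <x - l, w> to vanish. *)
Lemma best_approximation_orth l : W l ->
  (forall w, W w -> nsq (x - l) <= nsq (x - w)) ->
  forall w, W w -> ip (x - l) w = 0.
Proof.
move=> Wl lmin w Ww.
have perturb c : 0 <= 2 * complex.Re ((- c)^*%C * ip (x - l) w)
    + (complex.Re c ^+ 2 + complex.Im c ^+ 2) * nsq w.
  have := lmin _ (subspaceDZ hW c Ww Wl).
  have -> : x - (c *: w + l) = (x - l) + (- c) *: w by rewrite opprD addrA addrAC scaleNr.
  rewrite [nsq (_ + _ *: _)]nsqD nsqZ innerZr !raddfN /= !sqrrN; lra.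
case: (ip (x - l) w) perturb => [g1 g2] perturb.
have -> : g1 = 0.
  apply: (@linear_le_quadratic _ g1 (nsq w)) => s; have := perturb (s%:C%C).
  simpc => /=; lra.
have -> : g2 = 0.
  apply: (@linear_le_quadratic _ g2 (nsq w)) => s; have := perturb (Complex 0 s).
  simpc => /=; lra.
by [].
Qed.

End BestApproximation.


Section OrthogonalProjection.
Variable R : realType.
Variable H : hilbert R.
Local Notation ip := (@hinner R H).
Local Notation hn := (@hnorm R H).
Variable W : set H.
Hypothesis hW : closed_subspace W.

Lemma orthproj_spec x : W (orthproj W x) /\ forall w, W w -> ip (x - orthproj W x) w = 0.
Proof.
rewrite /orthproj; case: pselect => [e|no_proj]; first by case: (cid e).
exfalso; apply: no_proj; have [l Wl lmin] := best_approximation hW x.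
by exists l; split => //; exact: best_approximation_orth.
Qed.

Lemma orthproj_uniq x y : W y -> (forall w, W w -> ip (x - y) w = 0) -> orthproj W x = y.
Proof.
move=> Wy hy; have [Wp hp] := orthproj_spec x.
have Wd : W (orthproj W x - y) by apply: subspaceB.
apply/eqP; rewrite -subr_eq0; apply/eqP/inner_definite.
rewrite [X in ip X _](_ : _ = (x - y) - (x - orthproj W x)); last first.
  by rewrite [RHS]addrC opprB addrA subrK.
by rewrite innerBl (hy _ Wd) (hp _ Wd) subrr.
Qed.

Lemma orthproj_linear a x y : orthproj W (a *: x + y) = a *: orthproj W x + orthproj W y.
Proof.
have [Wx hx] := orthproj_spec x; have [Wy hy] := orthproj_spec y.
apply: orthproj_uniq; first exact: subspaceDZ.
move=> w Ww; rewrite (_ : _ - _ = a *: (x - orthproj W x) + (y - orthproj W y)).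
  by rewrite innerDl innerZl hx // hy // mulr0 addr0.
by rewrite scalerBr opprD addrACA.
Qed.

Lemma orthproj_orth x : (forall w, W w -> ip x w = 0) -> orthproj W x = 0.
Proof. by move=> h; apply: orthproj_uniq; [exact: subspace0 | move=> w Ww; rewrite subr0 h]. Qed.

(* P_W is a contraction (Pythagoras on x = P_W x + (x - P_W x)). *)
Lemma orthproj_contraction x : hn (orthproj W x) <= hn x.
Proof.
have [Wx hx] := orthproj_spec x.
apply: hnorm_le; first exact: hnorm_ge0.
have := nsqD (orthproj W x) (x - orthproj W x).
rewrite addrC subrK inner_conj hx // conjc0 mulr0 addr0 hnorm_sqr => ->.
by rewrite lerDl nsq_ge0.
Qed.

Lemma orthproj_bounded : bounded_op (orthproj W).
Proof.
split; first exact: orthproj_linear.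
by exists 1 => x; rewrite mul1r orthproj_contraction.
Qed.

End OrthogonalProjection.

Section Operators.
Variable R : realType.

Lemma bounded_op0 (H1 H2 : hilbert R) (T : H1 -> H2) : bounded_op T -> T 0 = 0.
Proof.
move=> [hT _]; have := hT 1 0 0; rewrite !scale1r addr0 => h.
by apply: (@addrI _ (T 0)); rewrite addr0 -h.
Qed.

Lemma bounded_opB (H1 H2 : hilbert R) (T : H1 -> H2) : bounded_op T ->
  forall x y, T (x - y) = T x - T y.
Proof. by move=> [hT _] x y; rewrite addrC -scaleN1r hT scaleN1r addrC. Qed.

Lemma bounded_op_bound (H1 H2 : hilbert R) (T : H1 -> H2) : bounded_op T ->
  exists2 c, 0 <= c & forall x, hnorm (T x) <= c * hnorm x.
Proof.
move=> [_ [c hc]]; exists `|c| => // x.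
by apply: le_trans (hc x) _; rewrite ler_wpM2r ?hnorm_ge0 ?ler_norm.
Qed.

Lemma bounded_op_comp (H1 H2 H3 : hilbert R) (T : H1 -> H2) (S : H2 -> H3) :
  bounded_op T -> bounded_op S -> bounded_op (S \o T).
Proof.
move=> hT hS; split; first by move=> a x y /=; rewrite hT.1 hS.1.
have [cT cT0 hcT] := bounded_op_bound hT; have [cS cS0 hcS] := bounded_op_bound hS.
by exists (cS * cT) => x; apply: le_trans (hcS _) _; rewrite -mulrA ler_wpM2l.
Qed.

Lemma adjoint_sym (H : hilbert R) (U Us : H -> H) : is_adjoint U Us -> is_adjoint Us U.
Proof. by move=> hU x y; rewrite inner_conj -hU -inner_conj. Qed.

Lemma adjoint_comp (H : hilbert R) (S Ss T Ts : H -> H) :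
  is_adjoint S Ss -> is_adjoint T Ts -> is_adjoint (S \o T) (Ts \o Ss).
Proof. by move=> hS hT x y /=; rewrite hS hT. Qed.

(* The adjoint of a bounded operator is bounded: it is linear because
   vectors orthogonal to everything vanish, and |T* y|^2 = <T T* y, y>
   <= c |T* y| |y| by Cauchy-Schwarz. *)
Lemma adjoint_bounded (H : hilbert R) (T Ts : H -> H) :
  bounded_op T -> is_adjoint T Ts -> bounded_op Ts.
Proof.
move=> hT hTs; split.
  move=> a y z; apply/eqP; rewrite -subr_eq0; apply/eqP/inner_eq0 => x.
  by rewrite innerBr innerDr innerZr -!hTs innerDr innerZr subrr.
have [c c0 hc] := bounded_op_bound hT; exists c => y.
have cs : hnorm (Ts y) ^+ 2 <= hnorm (T (Ts y)) * hnorm y.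
  by rewrite hnorm_sqr /nsq -hTs cauchy_schwarz.
have bound : hnorm (T (Ts y)) * hnorm y <= hnorm (Ts y) * (c * hnorm y).
  by rewrite mulrCA mulrA ler_wpM2r ?hnorm_ge0.
move: (le_trans cs bound) (hnorm_ge0 (Ts y)) (mulr_ge0 c0 (hnorm_ge0 y)).
move: (hnorm (Ts y)) (c * hnorm y) => t p; nra.
Qed.

(* An invertible operator maps closed subspaces to closed subspaces;
   closedness uses the boundedness of the inverse. *)
Lemma image_closed_subspace (H : hilbert R) (U : H -> H) (W : set H) :
  invertible_op U -> closed_subspace W -> closed_subspace (U @` W).
Proof.
move=> [hU [V [hV UV VU]]] hW; split.
- by exists 0; [exact: subspace0 | exact: bounded_op0].
- move=> a _ _ [x1 W1 <-] [x2 W2 <-]; exists (a *: x1 + x2); first exact: subspaceDZ.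
  by rewrite hU.1.
- move=> u l Wu ul; exists (V l); last exact: (congr1 (fun f => f l) UV).
  apply: (subspace_lim hW (u := V \o u)).
    move=> n /=; have [w Ww <-] := Wu n.
    by rewrite (_ : V (U w) = w) // -[V (U w)]/((V \o U) w) VU.
  have [cV cV0 hcV] := bounded_op_bound hV.
  move=> e e0; have cV1 : 0 < cV + 1 by rewrite ltr_wpDl.
  have [N hN] := ul _ (divr_gt0 e0 cV1); exists N => n Nn.
  rewrite /= -bounded_opB //; apply: le_lt_trans (hcV _) _.
  apply: le_lt_trans (ler_wpM2l cV0 (ltW (hN n Nn))) _.
  rewrite -[X in _ < X](@divfK _ (cV + 1)) ?gt_eqF // mulrDr mulr1 mulrC ltrDl.
  exact: divr_gt0.
Qed.

End Operators.

(* If U maps W into the closed subspace V, then P_W U* P_V = P_W U*: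
   for w in W, <U* (f - P_V f), w> = <f - P_V f, U w> = 0. *)
Lemma orthproj_adjoint_image (R : realType) (H : hilbert R) (U Us : H -> H)
    (W V : set H) : is_adjoint U Us -> bounded_op Us ->
  closed_subspace W -> closed_subspace V -> U @` W `<=` V ->
  forall f, orthproj W (Us (orthproj V f)) = orthproj W (Us f).
Proof.
move=> hUs hUsb hW hV UWV f; have [_ orthV] := orthproj_spec hV f.
apply/eqP; rewrite eq_sym -subr_eq0 -(bounded_opB (orthproj_bounded hW)).
rewrite -(bounded_opB hUsb) (orthproj_orth hW) // => w Ww.
by rewrite (adjoint_sym hUs) orthV //; apply: UWV; exists w.
Qed.

Lemma lower_bound_transport (R : realFieldType) (A c a b : R) :
  0 < A -> 0 <= c -> 0 <= a -> a <= c * b -> A / (c ^+ 2 + 1) * a ^+ 2 <= A * b ^+ 2.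
Proof.
move=> A0 c0 a0 acb; have c1 : 0 < c ^+ 2 + 1 by rewrite ltr_wpDl ?sqr_ge0.
rewrite mulrAC ler_pdivrMr // -mulrA ler_pM2l //.
have : a ^+ 2 <= c ^+ 2 * b ^+ 2 by rewrite -exprMn ler_pXn2r ?nnegrE // (le_trans a0).
by have := sqr_ge0 b; nra.
Qed.

Lemma upper_bound_transport (R : realFieldType) (B c a b : R) :
  0 <= B -> 0 <= c -> 0 <= a -> a <= c * b -> B * a ^+ 2 <= B * c ^+ 2 * b ^+ 2.
Proof.
move=> B0 c0 a0 acb; rewrite -mulrA ler_wpM2l // -exprMn.
by rewrite ler_pXn2r ?nnegrE // (le_trans a0).
Qed.

Lemma gfusion_sum_pullback (R : realType) (H : hilbert R) (J : countType)
    (Hs : J -> hilbert R) (W : J -> set H) (Lam : forall j, H -> Hs j) (v : J -> R)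
    (U Us : H -> H) :
  invertible_op U -> is_adjoint U Us -> (forall j, closed_subspace (W j)) ->
  forall f : H,
  \esum_(j in [set: J])
     (v j ^+ 2 * hnorm ((Lam j \o orthproj (W j) \o Us) (orthproj (U @` W j) f)) ^+ 2)%:E =
  \esum_(j in [set: J]) (v j ^+ 2 * hnorm (Lam j (orthproj (W j) (Us f))) ^+ 2)%:E.
Proof.
move=> hU hUs hW f; apply: eq_esum => j _ /=.
rewrite (orthproj_adjoint_image hUs (adjoint_bounded hU.1 hUs) (hW j)) //.
exact: image_closed_subspace.
Qed.

Unset Implicit Arguments.
Set Strict Implicit.

Theorem theorem3p1 (R : realType) (H : hilbert R) (Hsep : separable H)
    (J : countType) (Hs : J -> hilbert R)
    (W : J -> set H) (Lam : forall j, H -> Hs j) (v : J -> R)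
    (K U Us : H -> H)
    (HK : bounded_op K) (HU : invertible_op U) (HUs : is_adjoint U Us) :
  KgFF K W Lam v ->
  KgFF (U \o K \o Us) (fun j => U @` W j)
       (fun j => Lam j \o orthproj (W j) \o Us) v.
Proof.
move=> [hW hLam hv [Ks [hKs [A [B [A0 AB hAB]]]]]].
have hUsb := adjoint_bounded HU.1 HUs.
have [cU cU0 hcU] := bounded_op_bound HU.1.
have [cS cS0 hcS] := bounded_op_bound hUsb.
split=> // [j | j |].
- exact: image_closed_subspace.
- by do 2 apply: bounded_op_comp => //; exact: orthproj_bounded.
exists (U \o Ks \o Us); split.
  exact: adjoint_comp (adjoint_comp HUs hKs) (adjoint_sym HUs).
pose A' := A / (cU ^+ 2 + 1).
have A'0 : 0 < A' by rewrite divr_gt0 // ltr_wpDl ?sqr_ge0.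
exists A', (Num.max A' (B * cS ^+ 2)); split => //; first by rewrite le_max lexx.
move=> f; rewrite gfusion_sum_pullback //; have [lower upper] := hAB (Us f).
split; [apply: le_trans lower | apply: le_trans upper _]; rewrite lee_fin.
- exact: lower_bound_transport A0 cU0 (hnorm_ge0 _) (hcU _).
- apply: le_trans (upper_bound_transport (le_trans (ltW A0) AB) cS0 _ (hcS f)) _.
    exact: hnorm_ge0.
  by rewrite ler_wpM2r ?sqr_ge0 // le_max lexx orbT.
Qed.
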